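(* Let $(M,\Sigma_M,\mu,T_t)$ be a measure-preserving deterministic system. Then the following two conditions are equivalent: (a) there do not exist $n\in\mathbb{R}^{+}$ and $C\in\Sigma_M$ with $0<\mu(C)<1$ such that $T_n(C)=C$ except for a set of $\mu$-measure zero; (b) for every nontrivial finite-valued observation function $\Phi:M\to M_O$ and every $k\in\mathbb{R}^{+}$, the stochastic process $\{Z_t;\,t\in\mathbb{R}\}:=\{\Phi\circ T_t;\,t\in\mathbb{R}\}$ (random variables on $(M,\Sigma_M,\mu)$) has values $o_i,o_j\in M_O$ with $$0<P\{Z_{t+k}=o_j\mid Z_t=o_i\}<1 .$$
   Context: A (continuous-time) deterministic system is a quadruple $(M,\Sigma_M,\mu,T_t)$ where $(M,\Sigma_M,\mu)$ is a probability space and $T_t:M\to M$, $t\in\mathbb{R}$, are measurable maps with $T_{t_1+t_2}(m)=T_{t_2}(T_{t_1}(m))$ for all $m\in M$ and $t_1,t_2\in\mathbb{R}$, and with $(t,m)\mapsto T_t(m)$ jointly measurable. It is measure-preserving if $\mu(T_t(A))=\mu(A)$ for all $A\in\Sigma_M$ and all $t\in\mathbb{R}$. An observation function is a measurable map $\Phi:M\to M_O$ into a measurable space. It is finite-valued if it takes only finitely many values $o_1,\dots,o_r$ and $\mu(\{m:\Phi(m)=o_i\})>0$ for each $i$; it is nontrivial if $r\ge 2$. Here $P\{Z_{t+k}=o_j\mid Z_t=o_i\}=\mu(\{m:\Phi(T_{t+k}m)=o_j,\ \Phi(T_t m)=o_i\})/\mu(\{m:\Phi(T_t m)=o_i\})$.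 *)

From HB Require Import structures.
From mathcomp Require Import all_boot all_order all_algebra.
From mathcomp Require Import all_classical all_reals all_analysis.
Set Implicit Arguments. Unset Strict Implicit. Unset Printing Implicit Defensive.
Import Order.TTheory GRing.Theory Num.Theory.
Local Open Scope classical_set_scope.
Local Open Scope ring_scope.

Definition det_system d (M : measurableType d) (R : realType)
  (T : R -> M -> M) : Prop :=
  [/\ (forall t, measurable_fun setT (T t)),
      (forall t1 t2 m, T (t1 + t2) m = T t2 (T t1 m)) &
      measurable_fun setT (fun p : R * M => T p.1 p.2)].

(* measure-preserving: mu(T_t(A)) = mu(A) for all measurable A and all t
   (the image T_t(A) being measurable, as implicit in the paper). *)
Definition measure_preserving d (M : measurableType d) (R : realType)
  (P : probability M R) (T : R -> M -> M) : Prop :=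
  forall t (A : set M), measurable A ->
    measurable (T t @` A) /\ P (T t @` A) = P A.

Definition finite_valued d (M : measurableType d) (R : realType)
  (P : probability M R) d' (O : measurableType d') (Phi : M -> O) : Prop :=
  finite_set (range Phi) /\
  (forall o, range Phi o ->
     measurable (Phi @^-1` [set o]) /\ (0 < P (Phi @^-1` [set o]))%E).

Definition nontrivial_obs (M : Type) (O : Type) (Phi : M -> O) : Prop :=
  exists o1 o2, [/\ range Phi o1, range Phi o2 & o1 <> o2].

Definition cond_prob d (M : measurableType d) (R : realType)
  (P : probability M R) (T : R -> M -> M) (O : Type) (Phi : M -> O)
  (t k : R) (oi oj : O) : R :=
  fine (P [set m | Phi (T (t + k) m) = oj /\ Phi (T t m) = oi]) /
  fine (P [set m | Phi (T t m) = oi]).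

From HB Require Import structures.
From mathcomp Require Import all_boot all_order all_algebra.
From mathcomp Require Import all_classical all_reals all_analysis.
(* (b) => (a): if T_n C = C up to a null set and 0 < mu C < 1, the indicator of
   C is a nontrivial two-valued observation whose transition probabilities
   over time n are all 0 or 1.
   (a) => (b): the process Phi o T_t is stationary, so its transition
   probabilities do not depend on t.  If none of them lies strictly between 0
   and 1, then T_k maps almost all of each fiber {Phi = o} into a single fiber
   {Phi = f o}.  On the finitely many values f eventually cycles, f^m b = b,
   so the fiber {Phi = b} is almost contained in its preimage under T_(mk);
   both have the same measure, hence the fiber is T_(mk)-invariant up to a
   null set, and its measure lies strictly between 0 and 1 because Phi takes
   another value on a set of positive measure. *)

Set Implicit Arguments.
Unset Strict Implicit.
Unset Printing Implicit Defensive.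
Import Order.TTheory GRing.Theory Num.Theory.
Local Open Scope classical_set_scope.
Local Open Scope ring_scope.

Lemma iter_finite_orbit (T : Type) (D : set T) (f : T -> T) (a : T) :
  finite_set D -> D a -> (forall x, D x -> D (f x)) ->
  exists i j, (i < j)%N /\ iter i f a = iter j f a.
Proof.
move=> finD Da fD.
have Diter j : D (iter j f a) by elim: j => //= j /fD.
apply: contrapT => noncycle.
have inj : injective (fun j => iter j f a).
  move=> i j eij; case: (ltngtP i j) => // ij; exfalso; apply: noncycle.
  - by exists i, j.
  - by exists j, i.
apply: infinite_nat; apply: sub_finite_set (finite_preimage (in2W inj) finD).
by move=> j _; exact: Diter.
Qed.

Section negligible_content.
Context d (T : ringOfSetsType d) (R : realFieldType).
Variable mu : {content set T -> \bar R}.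

Lemma negligibleY A B :
  mu.-negligible (A `+` B) <->
  mu.-negligible (A `\` B) /\ mu.-negligible (B `\` A).
Proof.
split=> [nAB|[nAB nBA]]; last exact: negligibleU.
by split; apply: negligibleS nAB => x; [left|right].
Qed.

Lemma negligibleD_trans A B C :
  mu.-negligible (A `\` B) -> mu.-negligible (B `\` C) ->
  mu.-negligible (A `\` C).
Proof.
move=> nAB nBC; apply: negligibleS (negligibleU nAB nBC) => x [Ax nCx].
by have [Bx|nBx] := pselect (B x); [right|left].
Qed.

Lemma negligible_bigcup_finite (I : choiceType) (D : set I) (F : I -> set T) :
  finite_set D -> (forall i, D i -> mu.-negligible (F i)) ->
  mu.-negligible (\bigcup_(i in D) F i).
Proof.
move=> /finite_seqP[s ->] nF; rewrite bigcup_seq big_seq.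
by elim/big_ind: _ => //; [exact: negligible_set0 | exact: negligibleU].
Qed.

Lemma measure_negligibleY A B : measurable A -> measurable B ->
  mu.-negligible (A `+` B) -> mu A = mu B.
Proof.
move=> mA mB /negligibleY[nAB nBA].
rewrite (measureDI mu mA mB) (measureDI mu mB mA) setIC.
by rewrite (measure_negligible (measurableD mA mB) nAB)
  (measure_negligible (measurableD mB mA) nBA).
Qed.

Lemma measure_gt0_nonempty A : (0 < mu A)%E -> A !=set0.
Proof.
apply: contraPP => /set0P/negP/negPn/eqP ->.
by rewrite measure0 ltxx.
Qed.

End negligible_content.

Section negligible_finite_measure.
Context d (T : measurableType d) (R : realType).
Variable mu : {finite_measure set T -> \bar R}.

Lemma negligibleDP A B : measurable A -> measurable B ->
  mu.-negligible (A `\` B) <-> (mu A <= mu (A `&` B))%E.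
Proof.
move=> mA mB; rewrite (negligibleP _ (measurableD mA mB)) (measureDI mu mA mB).
rewrite -[leRHS]add0e leeD2rE ?fin_num_measure//; last exact: measurableI.
by rewrite measure_le0; split=> /eqP.
Qed.

Lemma negligibleD_swap A B : measurable A -> measurable B ->
  mu.-negligible (A `\` B) -> mu A = mu B -> mu.-negligible (B `\` A).
Proof.
move=> mA mB nAB eAB.
by apply/negligibleDP => //; rewrite setIC -eAB; apply/negligibleDP.
Qed.

End negligible_finite_measure.

Lemma preimage_asbool (T : Type) (C : set T) (b : bool) :
  (fun x => `[< C x >]) @^-1` [set b] = if b then C else ~` C.
Proof.
by apply/seteqP; split => x; rewrite /preimage/=; case: b; case: asboolP.
Qed.

Section observation.
Context d (M : measurableType d) (R : realType) (P : probability M R).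

Lemma measure_fiber_lt1 d' (O : measurableType d') (Phi : M -> O) o :
  finite_valued P Phi -> nontrivial_obs Phi -> range Phi o ->
  (P (Phi @^-1` [set o]) < 1)%E.
Proof.
move=> [_ fib] [x1 [x2 [r1 r2 ne12]]] ro.
have [c rc nco] : exists2 c, range Phi c & c <> o.
  have [eo|] := pselect (x1 = o); last by exists x1.
  by exists x2 => //; rewrite -eo; exact/nesym.
have [[mc Pc] [mo _]] := (fib c rc, fib o ro).
have sub : Phi @^-1` [set o] `<=` ~` (Phi @^-1` [set c]).
  by move=> x /= -> /esym; exact: nco.
apply: le_lt_trans (le_measure P (mem_set mo) (mem_set (measurableC mc)) sub) _.
(* back from the content coercion of [P] to the probability one *)
change (P (~` (Phi @^-1` [set c])) < 1)%E.
by rewrite probability_setC // gte_subl.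
Qed.

Lemma indicator_finite_valued_obs C :
  measurable C -> (0 < P C)%E -> (P C < 1)%E ->
  [/\ measurable_fun setT (fun x => `[< C x >]),
      finite_valued P (fun x => `[< C x >]) &
      nontrivial_obs (fun x => `[< C x >])].
Proof.
move=> mC PC0 PC1.
have mE (b : bool) : measurable (if b then C else ~` C).
  by case: b => //; exact: measurableC.
have PE (b : bool) : (0 < P (if b then C else ~` C))%E.
  by case: b => //=; rewrite probability_setC // sube_gt0.
have rE (b : bool) : range (fun x => `[< C x >]) b.
  have [x Ex] := measure_gt0_nonempty (mu := P) (PE b).
  by exists x; move: Ex; rewrite -preimage_asbool.
split.
- by apply: (measurable_fun_bool true); rewrite setTI preimage_asbool.
- by split=> [|b _]; [exact: finite_finset | rewrite preimage_asbool].
- by exists true, false.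
Qed.

End observation.

Section measure_preserving_flow.
Context d (M : measurableType d) (R : realType) (P : probability M R).
Context (T : R -> M -> M).
Hypotheses (flowT : det_system T) (presT : measure_preserving P T).

Definition degenerate_transitions (O : Type) (Phi : M -> O) (t k : R) :=
  forall oi oj,
  ~ (0 < cond_prob P T Phi t k oi oj /\ cond_prob P T Phi t k oi oj < 1).

Definition ae_successor_map (O : Type) (Phi : M -> O) (k : R) (f : O -> O) :=
  forall o, range Phi o -> range Phi (f o) /\
    P.-negligible (Phi @^-1` [set o] `\` T k @^-1` (Phi @^-1` [set f o])).

Lemma measurable_preimage_flow t B : measurable B -> measurable (T t @^-1` B).
Proof. by case: flowT => mT _ _ mB; rewrite -[_ @^-1` _]setTI; exact: mT. Qed.

Lemma preimage_flowD s u B : T (s + u) @^-1` B = T s @^-1` (T u @^-1` B).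
Proof.
by case: flowT => _ law _; apply/seteqP; split => x; rewrite /preimage/= law.
Qed.

Lemma negligible_not_range t : P.-negligible (~` range (T t)).
Proof.
have [mR PR] := presT t measurableT.
rewrite -setTD; apply: (negligibleD_swap (mu := P) _ _ _ PR) => //.
by apply: negligibleS (negligible_set0 P) => y [_]; apply.
Qed.

Lemma measure_preimage_flow t B : measurable B -> P (T t @^-1` B) = P B.
Proof.
move=> mB; have [mTTB <-] := presT t (measurable_preimage_flow t mB).
apply: measure_negligibleY => //.
apply: negligibleS (negligible_not_range t) => y.
case=> [[[x Bx <-] //] | [By nTTBy] [x _ exy]].
by apply: nTTBy; exists x; rewrite // /preimage/= exy.
Qed.

Lemma negligible_preimage_flow t N :
  P.-negligible N -> P.-negligible (T t @^-1` N).
Proof.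
move=> [B [mB PB NB]]; exists (T t @^-1` B); split.
- exact: measurable_preimage_flow.
- by rewrite measure_preimage_flow.
- by move=> x /NB.
Qed.

Lemma negligible_image_flow t N : P.-negligible N -> P.-negligible (T t @` N).
Proof.
move=> [B [mB PB NB]]; have [mTB PTB] := presT t mB.
exists (T t @` B); split => //; first by rewrite PTB.
by move=> _ [x /NB Bx <-]; exists x.
Qed.

Lemma image_preimage_flow_invariant n C : measurable C ->
  P (T n @` C `+` C) = 0%E <-> P.-negligible (T n @^-1` C `+` C).
Proof.
move=> mC; have [mTC PTC] := presT n mC.
have mY : measurable (T n @` C `+` C) by apply: measurableU; exact: measurableD.
rewrite -(negligibleP _ mY) !negligibleY.
split=> [[nTCC nCTC]|[nPC nCP]]; split.
- have nTTC : P.-negligible (T n @^-1` (T n @` C) `\` C).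
    have ePC := etrans (measure_preimage_flow n mTC) PTC.
    apply: (negligibleD_swap (mu := P) _ _ _ (esym ePC)) => //.
    - exact: measurable_preimage_flow.
    - by apply: negligibleS (negligible_set0 P) => x [Cx]; apply; exists x.
  apply: negligibleS (negligibleU nTTC (negligible_preimage_flow n nCTC)).
  move=> x [Cx nCx]; have [TCx|nTCx] := pselect ((T n @` C) (T n x)).
  + by left.
  + by right.
- apply: negligibleS (negligible_preimage_flow n nTCC) => x [Cx nCx].
  by split => //; exists x.
- apply: negligibleS (negligible_image_flow n nCP) => _ [[x Cx <-] nCx].
  by exists x.
- have nPCR :=
    negligibleU (negligible_image_flow n nPC) (negligible_not_range n).
  apply: negligibleS nPCR => y [Cy nTCy].
  have [[x _ exy]|nRy] := pselect (range (T n) y); last by right.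
  left; exists x => //; split; first by rewrite /preimage/= exy.
  by move=> Cx; apply: nTCy; exists x.
Qed.

Lemma cond_prob_stationary (O : Type) (Phi : M -> O) t k oi oj :
  measurable (Phi @^-1` [set oi]) -> measurable (Phi @^-1` [set oj]) ->
  cond_prob P T Phi t k oi oj =
  fine (P (T k @^-1` (Phi @^-1` [set oj]) `&` Phi @^-1` [set oi])) /
  fine (P (Phi @^-1` [set oi])).
Proof.
move=> mi mj; rewrite /cond_prob.
rewrite (_ : [set m | _ /\ _] =
    T t @^-1` (T k @^-1` (Phi @^-1` [set oj]) `&` Phi @^-1` [set oi]));
  last first.
  by rewrite preimage_setI -preimage_flowD.
rewrite (_ : [set m | _] = T t @^-1` (Phi @^-1` [set oi])) //.
rewrite !measure_preimage_flow //.
by apply: measurableI => //; exact: measurable_preimage_flow.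
Qed.

Lemma negligible_ratio_degenerate A B : measurable A -> measurable B ->
  (0 < P B)%E ->
  ~ (0 < fine (P (A `&` B)) / fine (P B) /\
     fine (P (A `&` B)) / fine (P B) < 1) ->
  P.-negligible (A `&` B) \/ P.-negligible (B `\` A).
Proof.
move=> mA mB PB0 nondeg; have mAB := measurableI _ _ mA mB.
have [AB0|ABpos] := eqVneq (P (A `&` B)) 0%E.
  by left; exists (A `&` B); split.
right; apply/negligibleDP => //; rewrite setIC.
change (P B <= P (A `&` B))%E.
have y0 : 0 < fine (P B) by rewrite -lte_fin fineK ?fin_num_measure.
have x0 : 0 < fine (P (A `&` B)).
  by rewrite -lte_fin fineK ?fin_num_measure // lt0e ABpos measure_ge0.
have : ~ (fine (P (A `&` B)) / fine (P B) < 1).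
  by move=> lt1; apply: nondeg; split => //; exact: divr_gt0.
rewrite ltr_pdivrMr // mul1r => /negP; rewrite -leNgt -lee_fin.
by rewrite !fineK ?fin_num_measure.
Qed.

Lemma degenerate_transition_successor d' (O : measurableType d') (Phi : M -> O)
    (k t : R) :
  finite_valued P Phi -> degenerate_transitions Phi t k ->
  exists f, ae_successor_map Phi k f.
Proof.
move=> [finR fib] degen.
suff succ o : exists o', range Phi o -> range Phi o' /\
    P.-negligible (Phi @^-1` [set o] `\` T k @^-1` (Phi @^-1` [set o'])).
  by have [f hf] := choice succ; exists f.
have [ro|nro] := pselect (range Phi o); last by exists o => /nro.
have [mo Po] := fib o ro; apply: contrapT => nosucc.
suff nFo : P.-negligible (Phi @^-1` [set o]).
  move: Po; rewrite lt0e => /andP[/eqP + _]; apply.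
  exact: measure_negligible nFo.
pose F o' := T k @^-1` (Phi @^-1` [set o']) `&` Phi @^-1` [set o].
apply: negligibleS (negligible_bigcup_finite (F := F) finR _).
  by move=> x Fx; exists (Phi (T k x)) => //; exists (T k x).
move=> o' ro'; have [mo' _] := fib o' ro'.
move: (degen o o'); rewrite cond_prob_stationary // => nondeg.
have mTo' := measurable_preimage_flow k mo'.
have [//|nD] := negligible_ratio_degenerate mTo' mo Po nondeg.
by exfalso; apply: nosucc; exists o' => _; split.
Qed.

(* The chain starts at [m.+1]: the flow axioms do not force [T 0 = id]. *)
Lemma negligibleD_iter (O : Type) (Phi : M -> O) (k : R) (f : O -> O) :
  ae_successor_map Phi k f -> forall o m, range Phi o ->
  P.-negligible (Phi @^-1` [set o] `\`
                 T (k *+ m.+1) @^-1` (Phi @^-1` [set iter m.+1 f o])).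
Proof.
move=> hf o m ro.
have rf n : range Phi (iter n f o) by elim: n => //= n /hf[].
elim: m => [|m IH]; first by rewrite mulr1n; exact: (hf o ro).2.
apply: negligibleD_trans IH _.
rewrite [k *+ m.+2]mulrSr preimage_flowD.
exact: negligible_preimage_flow _ (hf _ (rf m.+1)).2.
Qed.

Lemma degenerate_transitions_invariant_set d' (O : measurableType d')
    (Phi : M -> O) (k t : R) :
  finite_valued P Phi -> nontrivial_obs Phi -> 0 < k ->
  degenerate_transitions Phi t k ->
  exists n C, [/\ 0 < n, measurable C, (0 < P C)%E, (P C < 1)%E &
                  P (T n @` C `+` C) = 0%E].
Proof.
move=> finPhi ntPhi k0 degen; have [finR fib] := finPhi.
have [f hf] := degenerate_transition_successor finPhi degen.
have [a ra] : exists a, range Phi a by case: ntPhi => a [? [ra _ _]]; exists a.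
have rf m : range Phi (iter m f a) by elim: m => //= m /hf[].
have [i [j [ij eij]]] := iter_finite_orbit finR ra (fun o ro => (hf o ro).1).
have cyc : iter (j - i).-1.+1 f (iter i f a) = iter i f a.
  by rewrite prednK ?subn_gt0 // -iterD subnK ?(ltnW ij).
have := negligibleD_iter hf (j - i).-1 (rf i); rewrite cyc => nC.
have [mC PC] := fib _ (rf i).
exists (k *+ (j - i).-1.+1), (Phi @^-1` [set iter i f a]); split => //.
- by rewrite pmulrn_rgt0.
- exact: measure_fiber_lt1.
apply/image_preimage_flow_invariant => //; apply/negligibleY; split => //.
apply: (negligibleD_swap (mu := P) mC _ nC (esym (measure_preimage_flow _ mC))).
exact: measurable_preimage_flow.
Qed.

Lemma invariant_indicator_cond_prob n C t oi oj : measurable C ->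
  P.-negligible (T n @^-1` C `+` C) ->
  cond_prob P T (fun x => `[< C x >]) t n oi oj = 0 \/
  cond_prob P T (fun x => `[< C x >]) t n oi oj = 1.
Proof.
move=> mC invC; set Phi := fun x => `[< C x >].
have mE b : measurable (Phi @^-1` [set b]).
  by rewrite preimage_asbool; case: b => //; exact: measurableC.
have invE b :
    P.-negligible (T n @^-1` (Phi @^-1` [set b]) `+` Phi @^-1` [set b]).
  rewrite preimage_asbool; case: b => //.
  by rewrite -preimage_setC /setY !setDE !setCK setIC [X in _ `|` X]setIC setUC.
rewrite cond_prob_stationary //.
have -> : P (T n @^-1` (Phi @^-1` [set oj]) `&` Phi @^-1` [set oi]) =
          P (Phi @^-1` [set oj] `&` Phi @^-1` [set oi]).
  apply: measure_negligibleY; [|exact: measurableI|].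
    by apply: measurableI => //; exact: measurable_preimage_flow.
  by rewrite -setIYl; exact: negligibleS (@subIsetl _ _ _) (invE oj).
have [->|nij] := eqVneq oj oi.
  rewrite setIid; have [->|nz] := eqVneq (fine (P (Phi @^-1` [set oi]))) 0.
    by left; rewrite mul0r.
  by right; exact: divff.
left; rewrite (_ : _ `&` _ = set0) ?mul0r; last first.
  by apply/seteqP; split => x // [/= ej ei]; move: nij; rewrite -ej -ei eqxx.
by rewrite (_ : P set0 = 0%E) ?mul0r //; exact: measure0.
Qed.

End measure_preserving_flow.

Theorem theorem1 (d : measure_display) (M : measurableType d) (R : realType)
  (P : probability M R) (T : R -> M -> M) :
  det_system T -> measure_preserving P T ->
  (~ (exists (n : R) (C : set M),
        [/\ 0 < n, measurable C, (0 < P C)%E, (P C < 1)%E &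
            P ((T n @` C `\` C) `|` (C `\` T n @` C)) = 0%E])
   <->
   (forall (d' : measure_display) (O : measurableType d') (Phi : M -> O),
      measurable_fun setT Phi -> finite_valued P Phi -> nontrivial_obs Phi ->
      forall k : R, 0 < k -> forall t : R,
        exists oi oj : O,
          0 < cond_prob P T Phi t k oi oj /\ cond_prob P T Phi t k oi oj < 1)).
Proof.
move=> flowT presT; split.
- move=> noinv d' O Phi _ finPhi ntPhi k k0 t; apply: contrapT => degen.
  apply: noinv.
  apply: (degenerate_transitions_invariant_set (t := t) flowT presT)
    finPhi ntPhi k0 _.
  by move=> oi oj cp; apply: degen; exists oi, oj.
- move=> nondegen [n [C [n0 mC PC0 PC1 invC]]].
  have [mPhi finPhi ntPhi] := indicator_finite_valued_obs mC PC0 PC1.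
  have [oi [oj [cp0 cp1]]] := nondegen _ _ _ mPhi finPhi ntPhi n n0 0.
  have invC' := (image_preimage_flow_invariant flowT presT n mC).1 invC.
  have [e|e] := invariant_indicator_cond_prob flowT presT 0 oi oj mC invC'.
  + by rewrite e ltxx in cp0.
  + by rewrite e ltxx in cp1.
Qed.
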